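(* A morphism in $\mathbf{MetCH_{sep}}$ is an epimorphism if and only if it is surjective.
   Context: A metric on a set $X$ is a map $d\colon X\times X\to[0,\infty]$ with $d(x,x)=0$ and $d(x,z)\le d(x,y)+d(y,z)$ (not necessarily symmetric, $\infty$ allowed); separated means $d(x,y)=0=d(y,x)$ implies $x=y$. A separated metric compact Hausdorff space is a compact Hausdorff space with a separated metric $d\colon X\times X\to[0,\infty]$ continuous with respect to the upper topology on $[0,\infty]$ (open sets $]u,\infty]$, plus $\emptyset$ and $[0,\infty]$). $\mathbf{MetCH_{sep}}$ has these spaces as objects and continuous non-expansive maps ($d_Y(f(x),f(y))\le d_X(x,y)$) as morphisms. *)

From HB Require Import structures.
From mathcomp Require Import all_boot all_order all_algebra.
From mathcomp Require Import all_classical all_reals all_analysis.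
From mathcomp Require Import Rstruct Rstruct_topology.

Set Implicit Arguments.
Unset Strict Implicit.
Unset Printing Implicit Defensive.

Import Order.TTheory GRing.Theory Num.Theory.
Local Open Scope classical_set_scope.
Local Open Scope ereal_scope.

(* Values in [0, +oo] are modelled as nonnegative extended reals. *)
Definition ExtR := \bar (Rdefinitions.R).

Definition is_metric (X : Type) (d : X -> X -> ExtR) : Prop :=
  (forall x y, 0 <= d x y) /\
  (forall x, d x x = 0) /\
  (forall x y z, d x z <= d x y + d y z).

Definition separated (X : Type) (d : X -> X -> ExtR) : Prop :=
  forall x y, d x y = 0 -> d y x = 0 -> x = y.

(* Continuity of d : X x X -> [0,oo] w.r.t. the upper topology on [0,oo],
   whose nontrivial open sets are the ]u,oo]: preimages of ]u,oo] are open. *)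
Definition upper_continuous (X : topologicalType) (d : X -> X -> ExtR) : Prop :=
  forall u : ExtR, open [set p : X * X | u < d p.1 p.2].

Record MetCHsep := MkMetCHsep {
  mc_space : topologicalType;
  mc_dist : mc_space -> mc_space -> ExtR;
  mc_compact : compact (@setT mc_space);
  mc_hausdorff : hausdorff_space mc_space;
  mc_metric : is_metric mc_dist;
  mc_separated : separated mc_dist;
  mc_cont : upper_continuous mc_dist }.

Definition is_morphism (X Y : MetCHsep) (f : mc_space X -> mc_space Y) : Prop :=
  continuous f /\ (forall x y, @mc_dist Y (f x) (f y) <= @mc_dist X x y).

Definition is_epi (X Y : MetCHsep) (f : mc_space X -> mc_space Y) : Prop :=
  forall (Z : MetCHsep) (g h : mc_space Y -> mc_space Z),
    @is_morphism Y Z g -> @is_morphism Y Z h ->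
    (forall x, g (f x) = h (f x)) -> forall y, g y = h y.

From Pilot Require Import Defs.
From mathcomp Require Import all_boot all_order all_algebra.
From mathcomp Require Import all_classical all_reals all_analysis.
From mathcomp Require Import Rstruct Rstruct_topology.
From mathcomp Require Import lra.

(** Surjective morphisms are clearly epic.  Conversely, suppose [y0] is not in
   the compact image of [f].  Urysohn's lemma gives a continuous
   [phi : Y -> R] vanishing on the image with [phi y0 = 1].  Glue two copies of
   [Y] along the zero set [K] of [phi], concretely as the subspace
   [{(y, t) | t = 0 \/ t = phi y}] of [Y * R]: the embeddings [y |-> (y, 0)]
   and [y |-> (y, phi y)] agree on the image of [f] but differ at [y0].  The
   distance of two glued points is the smaller of the distance of their base
   points, if they lie on a common copy, and the detour
   [inf_{k in K} d y k + d k y'] through [K].  Both embeddings are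
   non-expansive, and the metric is separated because, [K] being compact, the
   detour [inf_{k in K} d y k + d k y] is positive for [y] outside [K]. *)

Set Implicit Arguments.
Unset Strict Implicit.
Unset Printing Implicit Defensive.

Import Order.TTheory GRing.Theory Num.Theory.
Local Open Scope classical_set_scope.
Local Open Scope ring_scope.
Local Notation RR := Rdefinitions.R.

Lemma ge0_neqNy (x : ExtR) : (0 <= x)%E -> x != -oo%E.
Proof. by case: x. Qed.

Lemma ge0_eqyVfin (x : ExtR) : (0 <= x)%E -> x = +oo%E \/ x \is a fin_num.
Proof. by case: x => [r| |] // _; [right|left]. Qed.

Lemma lte_fin_between (u v : ExtR) : (u < v)%E -> exists r : RR, (u < r%:E < v)%E.
Proof.
case: u => [r| |]; case: v => [s| |] //=.
- rewrite lte_fin => h; exists ((r + s) / 2); rewrite !lte_fin; apply/andP; split; lra.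
- by move=> _; exists (r + 1); rewrite ltry lte_fin andbT; lra.
- by move=> _; exists (s - 1); rewrite ltNyr lte_fin /=; lra.
- by move=> _; exists 0; rewrite ltNyr ltry.
Qed.

Lemma lteD_split_fin (u x z : ExtR) : (0 <= x)%E -> (0 <= z)%E -> (u < x + z)%E ->
  exists a b : RR, [/\ (a%:E < x)%E, (b%:E < z)%E & (u <= (a + b)%:E)%E].
Proof.
case: u => [r| |]; last first.
- move=> x0 z0 _; exists (-1), (-1); split; last exact: leNye.
  + by apply: lt_le_trans x0; rewrite lte_fin; lra.
  + by apply: lt_le_trans z0; rewrite lte_fin; lra.
- by move=> _ _; rewrite ltNge leey.
case: x => [x| |] //; case: z => [z| |] // x0 z0 h.
- move: h; rewrite -EFinD lte_fin => h.
  exists (x - (x + z - r) / 2), (z - (x + z - r) / 2); rewrite !lte_fin lee_fin.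
  split; lra.
- move: x0; rewrite lee_fin => x0.
  exists (x - 1), (r - x + 1); rewrite lte_fin ltry lee_fin.
  split => //; lra.
- move: z0; rewrite lee_fin => z0.
  exists (r - z + 1), (z - 1); rewrite lte_fin ltry lee_fin.
  split => //; lra.
- by exists (r + 1), (-1); rewrite !ltry lee_fin; split => //; lra.
Qed.

Section ProductTopology.
Variables A B C : topologicalType.

Lemma fst_continuous : continuous (@fst A B).
Proof. by move=> [a b]; exact: cvg_fst. Qed.

Lemma snd_continuous : continuous (@snd A B).
Proof. by move=> [a b]; exact: cvg_snd. Qed.

Lemma continuousT_comp (f : A -> B) (g : B -> C) :
  continuous f -> continuous g -> continuous (g \o f).
Proof. by move=> fc gc x; exact: continuous_comp (fc x) (gc (f x)). Qed.

Lemma continuous_pair (f : A -> B) (g : A -> C) :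
  continuous f -> continuous g -> continuous (fun x => (f x, g x)).
Proof. by move=> fc gc x; apply: cvg_pair; [exact: fc | exact: gc]. Qed.

Lemma closed_setX (P : set A) (Q : set B) : closed P -> closed Q -> closed (P `*` Q).
Proof.
move=> cP cQ; rewrite (_ : P `*` Q = fst @^-1` P `&` snd @^-1` Q) //.
apply: closedI; apply: preimage_closed => // p _.
- exact: fst_continuous.
- exact: snd_continuous.
Qed.

End ProductTopology.

Lemma continuous_map_pair (A B A' B' : topologicalType) (f : A -> A') (g : B -> B') :
  continuous f -> continuous g -> continuous (fun w : A * B => (f w.1, g w.2)).
Proof.
move=> fc gc; apply: continuous_pair.
- exact: continuousT_comp (@fst_continuous _ _) fc.
- exact: continuousT_comp (@snd_continuous _ _) gc.
Qed.

Lemma closed_eqfun (W : topologicalType) (f g : W -> RR) :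
  continuous f -> continuous g -> closed [set w | f w = g w].
Proof.
move=> fc gc.
have -> : [set w | f w = g w] = (fun w => f w - g w) @^-1` [set 0].
  apply/seteqP; split => w /= h; first by rewrite h subrr.
  by apply/eqP; rewrite -subr_eq0 h.
apply: preimage_closed (@closed_eq RR 0) => w _.
exact: (@continuousB RR RR^o _ f g w (fc w) (gc w)).
Qed.

Lemma open_separation_comp (W S : topologicalType) (j : W -> S) (p q : W) :
  continuous j -> hausdorff_space S -> j p != j q ->
  exists2 AB : set W * set W, (p \in AB.1 /\ q \in AB.2) &
    [/\ open AB.1, open AB.2 & AB.1 `&` AB.2 == set0].
Proof.
move=> jc; rewrite open_hausdorff => /[apply] -[[A B] /= [pA qB] [oA oB AB0]].
exists (j @^-1` A, j @^-1` B) => /=.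
  by split; rewrite in_setE /= -in_setE.
split; [exact: open_comp oA | exact: open_comp oB |].
by apply/eqP; rewrite -preimage_setI (eqP AB0) preimage_set0.
Qed.

Lemma hausdorff_prod (A B : topologicalType) :
  hausdorff_space A -> hausdorff_space B -> hausdorff_space (A * B)%type.
Proof.
move=> hA hB; rewrite open_hausdorff => -[a b] [a' b'].
rewrite xpair_eqE negb_and => /orP[ne|ne].
- exact: (@open_separation_comp _ _ _ (a, b) (a', b') (@fst_continuous A B) hA ne).
- exact: (@open_separation_comp _ _ _ (a, b) (a', b') (@snd_continuous A B) hB ne).
Qed.

Lemma set_val_continuous (S : topologicalType) (A : set S) :
  continuous (val : set_type A -> S).
Proof. exact: initial_continuous. Qed.

Lemma hausdorff_set_type (S : topologicalType) (A : set S) :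
  hausdorff_space S -> hausdorff_space (set_type A).
Proof.
move=> hS; rewrite open_hausdorff => p q pq.
apply: (open_separation_comp (@set_val_continuous S A) hS).
by apply: contra_neq pq; exact: val_inj.
Qed.

Section LowerSemicontinuity.
Variable W : topologicalType.

Lemma upper_continuousP (d : W -> W -> ExtR) : (forall x y, 0 <= d x y)%E ->
  upper_continuous d <-> lower_semicontinuous (fun p : W * W => d p.1 p.2).
Proof.
move=> d_ge0; split => [dc|/lower_semicontinuousP dc [r| |]] //.
- by apply/lower_semicontinuousP => r; exact: dc.
- rewrite [X in open X](_ : _ = set0); first exact: open0.
  by apply/seteqP; split => p //=; rewrite ltNge leey.
- rewrite [X in open X](_ : _ = setT); first exact: openT.
  by apply/seteqP; split => p //= _; rewrite ltNye ge0_neqNy.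
Qed.

Lemma lower_semicontinuous_min (F G : W -> ExtR) :
  lower_semicontinuous F -> lower_semicontinuous G ->
  lower_semicontinuous (fun w => Order.min (F w) (G w)).
Proof.
move=> Fl Gl w a; rewrite lt_min => /andP[/Fl[U nU hU] /Gl[V nV hV]].
by exists (U `&` V); [exact: filterI | move=> w' [/hU Uw' /hV Vw']; rewrite lt_min Uw'].
Qed.

Lemma lower_semicontinuous_comp (V : topologicalType) (j : V -> W) (F : W -> ExtR) :
  continuous j -> lower_semicontinuous F -> lower_semicontinuous (F \o j).
Proof.
move=> jc Fl v a /Fl[U nU hU]; exists (j @^-1` U) => [|v' /hU //].
exact: jc.
Qed.

End LowerSemicontinuity.

Section DistanceThrough.
Variable Y : MetCHsep.
Local Notation T := (mc_space Y).
Local Notation d := (@mc_dist Y).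

Lemma mc_dist_ge0 x y : (0 <= d x y)%E.
Proof. by case: (mc_metric Y). Qed.

Lemma mc_dist_refl x : d x x = 0%E.
Proof. by case: (mc_metric Y) => _ []. Qed.

Lemma mc_dist_triangle x y z : (d x z <= d x y + d y z)%E.
Proof. by case: (mc_metric Y) => _ []. Qed.

Lemma mc_dist_lsc : lower_semicontinuous (fun p : T * T => d p.1 p.2).
Proof. exact/(upper_continuousP mc_dist_ge0)/mc_cont. Qed.

Lemma detour_gt_near (y k y' : T) (u : ExtR) : (u < d y k + d k y')%E ->
  \forall k' \near k & w \near (y, y'), (u < d w.1 k' + d k' w.2)%E.
Proof.
move=> /(lteD_split_fin (mc_dist_ge0 _ _) (mc_dist_ge0 _ _)) [a [b [ha hb hu]]].
have [V [[U1 V1] /= [U1y V1k] sub1] gt1] := @mc_dist_lsc (y, k) a ha.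
have [V' [[V2 W2] /= [V2k W2y'] sub2] gt2] := @mc_dist_lsc (k, y') b hb.
exists (V1 `&` V2, U1 `*` W2) => /=.
  by split; [exact: filterI | exists (U1, W2)].
move=> [k' [z z']] /= [[V1k' V2k'] [U1z W2z']].
apply: le_lt_trans hu _; rewrite EFinD; apply: lteD.
- by apply: (gt1 (z, k')); apply: sub1.
- by apply: (gt2 (k', z')); apply: sub2.
Qed.

Variable K : set T.

Definition dist_via (y y' : T) : ExtR := ereal_inf [set (d y k + d k y')%E | k in K].

Lemma dist_via_ge0 y y' : (0 <= dist_via y y')%E.
Proof.
by apply: le_ereal_inf_tmp => _ [k _ <-]; rewrite adde_ge0 ?mc_dist_ge0.
Qed.

Lemma dist_via_le y y' k : K k -> (dist_via y y' <= d y k + d k y')%E.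
Proof. by move=> Kk; apply: ereal_inf_lbound; exists k. Qed.

Lemma mc_dist_le_via y y' : (d y y' <= dist_via y y')%E.
Proof. by apply: le_ereal_inf_tmp => _ [k _ <-]; exact: mc_dist_triangle. Qed.

Lemma dist_via_trianglel y y' y'' : (dist_via y y'' <= d y y' + dist_via y' y'')%E.
Proof.
have [->|d_fin] := ge0_eqyVfin (mc_dist_ge0 y y').
  by rewrite addye ?leey // ge0_neqNy // dist_via_ge0.
rewrite addeC -leeBlDr //; apply: le_ereal_inf_tmp => _ [k Kk <-].
rewrite leeBlDr //; apply: le_trans (dist_via_le _ _ Kk) _.
by rewrite addeAC leeD2r // addeC mc_dist_triangle.
Qed.

Lemma dist_via_triangler y y' y'' : (dist_via y y'' <= dist_via y y' + d y' y'')%E.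
Proof.
have [->|d_fin] := ge0_eqyVfin (mc_dist_ge0 y' y'').
  by rewrite addey ?leey // ge0_neqNy // dist_via_ge0.
rewrite -leeBlDr //; apply: le_ereal_inf_tmp => _ [k Kk <-].
rewrite leeBlDr //; apply: le_trans (dist_via_le _ _ Kk) _.
by rewrite -addeA leeD2l // mc_dist_triangle.
Qed.

Lemma dist_via_triangle y y' y'' :
  (dist_via y y'' <= dist_via y y' + dist_via y' y'')%E.
Proof.
by apply: le_trans (dist_via_triangler y y' y'') _; rewrite leeD2l // mc_dist_le_via.
Qed.

Hypothesis K_compact : compact K.

Lemma dist_via_lsc : lower_semicontinuous (fun p : T * T => dist_via p.1 p.2).
Proof.
move=> [y y'] a /lte_fin_between[r /andP[ar rD]].
have cover : \forall w \near (y, y'), K `<=` (fun k => r%:E < d w.1 k + d k w.2)%E.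
  apply: (proj1 (compact_near_coveringP K) K_compact _ (nbhs (y, y')) _ _) => k Kk.
  exact/detour_gt_near/(lt_le_trans rD (dist_via_le _ _ Kk)).
exists [set w | K `<=` (fun k => r%:E < d w.1 k + d k w.2)%E] => // w Kw.
apply: lt_le_trans ar _.
by apply: le_ereal_inf_tmp => _ [k Kk <-]; exact/ltW/Kw.
Qed.

Lemma dist_via_gt0 y : ~ K y -> (0 < dist_via y y)%E.
Proof.
move=> Ky.
have cover : \forall r \near (0 : RR)^'+, K `<=` (fun k => r%:E < d y k + d k y)%E.
  apply: (proj1 (compact_near_coveringP K) K_compact _ (0 : RR)^'+ _ _) => k Kk.
  have detour_gt0 : (0 < d y k + d k y)%E.
    rewrite lt_def adde_ge0 ?mc_dist_ge0 // andbT padde_eq0 ?mc_dist_ge0 //.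
    by apply: contraPN Ky => /andP[/eqP yk /eqP ky]; rewrite (mc_separated yk ky).
  have [e /andP[e0 eD]] := lte_fin_between detour_gt0.
  have [[A B] /= [Ak By] sub] := detour_gt_near eD.
  exists (A, [set r : RR | r < e]) => /=.
    by split => //; apply: nbhs_right_lt; rewrite -lte_fin.
  move=> [k' r] /= [Ak' re]; apply: lt_trans (sub (k', (y, y)) _).
    by rewrite lte_fin.
  by split => //; exact: nbhs_singleton.
have [r [Kr r0]] := filter_ex (filterI cover (nbhs_right_gt 0)).
apply: (@lt_le_trans _ _ r%:E); first by rewrite lte_fin.
by apply: le_ereal_inf_tmp => _ [k Kk <-]; exact/ltW/Kr.
Qed.

End DistanceThrough.

Section Gluing.
Variable Y : MetCHsep.
Local Notation T := (mc_space Y).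
Local Notation d := (@mc_dist Y).
Variable phi : T -> RR.
Hypothesis phi_continuous : continuous phi.

Let K : set T := [set y | phi y = 0].

Let K_compact : compact K.
Proof.
apply: (@subclosed_compact _ _ setT) => //; last exact: mc_compact.
exact: closed_eqfun phi_continuous (@cst_continuous _ RR 0).
Qed.

Definition sheet0 : set (T * RR) := [set p | p.2 = 0].
Definition sheet_phi : set (T * RR) := [set p | p.2 = phi p.1].

Definition glued_space : topologicalType := set_type (sheet0 `|` sheet_phi).

Definition embed0 (y : T) : glued_space :=
  exist _ (y, 0) (mem_set (or_introl erefl : (sheet0 `|` sheet_phi) (y, 0))).
Definition embed_phi (y : T) : glued_space :=
  exist _ (y, phi y) (mem_set (or_intror erefl : (sheet0 `|` sheet_phi) (y, phi y))).

Lemma embed0_continuous : continuous embed0.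
Proof.
apply: continuous_comp_initial.
exact: continuous_pair (fun y => @cvg_id _ (nbhs y)) (@cst_continuous _ RR 0).
Qed.

Lemma embed_phi_continuous : continuous embed_phi.
Proof.
apply: continuous_comp_initial.
exact: continuous_pair (fun y => @cvg_id _ (nbhs y)) phi_continuous.
Qed.

Lemma embed0_eq_phi y : embed0 y = embed_phi y <-> phi y = 0.
Proof.
split => [/(congr1 (fun z => (val z).2)) /= <- //|phi_y].
by apply: val_inj => /=; rewrite phi_y.
Qed.

Lemma glued_space_compact : compact [set: glued_space].
Proof.
have -> : [set: glued_space] = range embed0 `|` range embed_phi.
  apply/seteqP; split => // z _.
  have := set_valP z; rewrite /= => -[] e; [left|right]; exists (val z).1 => //;
    by apply: val_inj => /=; rewrite -e; case: (val z).
by apply: compactU; apply: continuous_compact; try exact: mc_compact;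
  apply: continuous_subspaceT; [exact: embed0_continuous | exact: embed_phi_continuous].
Qed.

Lemma glued_space_hausdorff : hausdorff_space glued_space.
Proof. exact/hausdorff_set_type/hausdorff_prod/Rhausdorff/mc_hausdorff. Qed.

Definition same_sheet : set ((T * RR) * (T * RR)) :=
  sheet0 `*` sheet0 `|` sheet_phi `*` sheet_phi.

Lemma closed_same_sheet : closed same_sheet.
Proof.
have closed_sheet0 : closed sheet0.
  exact: closed_eqfun (@snd_continuous _ _) (@cst_continuous _ RR 0).
have closed_sheet_phi : closed sheet_phi.
  exact: closed_eqfun (@snd_continuous _ _)
    (continuousT_comp (@fst_continuous _ _) phi_continuous).
by apply: closedU; apply: closed_setX.
Qed.

Lemma same_sheet_refl (z : glued_space) : same_sheet (val z, val z).
Proof. by case: (set_valP z) => e; [left|right]. Qed.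

Lemma same_sheet_zero p q r :
  same_sheet (p, q) -> same_sheet (q, r) -> ~ same_sheet (p, r) -> K q.1.
Proof.
move=> [[p0 q0]|[pphi qphi]] [[q0' r0]|[qphi' rphi]] npr.
- by exfalso; apply: npr; left.
- by rewrite /K /= -qphi' q0.
- by rewrite /K /= -qphi q0'.
- by exfalso; apply: npr; right.
Qed.

Definition sheet_dist (p q : T * RR) : ExtR :=
  if `[< same_sheet (p, q) >] then d p.1 q.1 else +oo%E.

Lemma sheet_dist_same p q : same_sheet (p, q) -> sheet_dist p q = d p.1 q.1.
Proof. by move=> h; rewrite /sheet_dist asboolT. Qed.

Lemma sheet_dist_nsame p q : ~ same_sheet (p, q) -> sheet_dist p q = +oo%E.
Proof. by move=> h; rewrite /sheet_dist asboolF. Qed.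

Lemma mc_dist_le_sheet p q : (d p.1 q.1 <= sheet_dist p q)%E.
Proof. by rewrite /sheet_dist; case: asboolP => // _; exact: leey. Qed.

Lemma sheet_dist_ge0 p q : (0 <= sheet_dist p q)%E.
Proof. exact: le_trans (mc_dist_ge0 _ _) (mc_dist_le_sheet p q). Qed.

Lemma sheet_dist_lsc :
  lower_semicontinuous (fun w : (T * RR) * (T * RR) => sheet_dist w.1 w.2).
Proof.
move=> [p q] a /=; have [spq|nspq] := pselect (same_sheet (p, q)).
  rewrite sheet_dist_same // => ha.
  have base_continuous := continuous_map_pair (@fst_continuous T RR) (@fst_continuous T RR).
  have base_lsc := lower_semicontinuous_comp base_continuous (@mc_dist_lsc Y).
  have [V nV hV] := base_lsc (p, q) a ha.
  by exists V => // w' /hV /lt_le_trans; apply; exact: mc_dist_le_sheet.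
exists (~` same_sheet).
  by apply: open_nbhs_nbhs; split => //; exact: closed_openC closed_same_sheet.
by move=> [p' q'] /= nspq'; rewrite sheet_dist_nsame // ltry.
Qed.

Definition glued_dist (p q : glued_space) : ExtR :=
  Order.min (sheet_dist (val p) (val q)) (dist_via K (val p).1 (val q).1).

Lemma glued_dist_cases p q :
  glued_dist p q = sheet_dist (val p) (val q) \/
  glued_dist p q = dist_via K (val p).1 (val q).1.
Proof. by rewrite /glued_dist /Order.min; case: ifP; [left|right]. Qed.

Lemma glued_dist_le_sheet p q : (glued_dist p q <= sheet_dist (val p) (val q))%E.
Proof. by rewrite ge_min lexx. Qed.

Lemma glued_dist_le_via p q : (glued_dist p q <= dist_via K (val p).1 (val q).1)%E.
Proof. by rewrite ge_min lexx orbT. Qed.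

Lemma mc_dist_le_glued p q : (d (val p).1 (val q).1 <= glued_dist p q)%E.
Proof. by rewrite le_min mc_dist_le_sheet mc_dist_le_via. Qed.

Lemma glued_dist_ge0 p q : (0 <= glued_dist p q)%E.
Proof. exact: le_trans (mc_dist_ge0 _ _) (mc_dist_le_glued p q). Qed.

Lemma glued_dist_refl p : glued_dist p p = 0%E.
Proof.
rewrite /glued_dist (sheet_dist_same (same_sheet_refl p)) mc_dist_refl.
exact/min_idPl/dist_via_ge0.
Qed.

Lemma glued_dist_le_sheet_sum (p q r : glued_space) :
  (glued_dist p r <= sheet_dist (val p) (val q) + sheet_dist (val q) (val r))%E.
Proof.
have [spq|nspq] := pselect (same_sheet (val p, val q)); last first.
  by rewrite (sheet_dist_nsame nspq) addye ?leey // ge0_neqNy // sheet_dist_ge0.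
have [sqr|nsqr] := pselect (same_sheet (val q, val r)); last first.
  by rewrite (sheet_dist_nsame nsqr) addey ?leey // ge0_neqNy // sheet_dist_ge0.
rewrite (sheet_dist_same spq) (sheet_dist_same sqr).
have [spr|nspr] := pselect (same_sheet (val p, val r)).
  by apply: le_trans (glued_dist_le_sheet _ _) _; rewrite sheet_dist_same // mc_dist_triangle.
apply: le_trans (glued_dist_le_via _ _) _.
exact/dist_via_le/(same_sheet_zero spq sqr nspr).
Qed.

Lemma glued_dist_triangle p q r : (glued_dist p r <= glued_dist p q + glued_dist q r)%E.
Proof.
have [->|->] := glued_dist_cases p q; have [->|->] := glued_dist_cases q r.
- exact: glued_dist_le_sheet_sum.
- apply: le_trans (glued_dist_le_via _ _) _; apply: le_trans (dist_via_trianglel K _ _ _) _.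
  exact/leeD2r/mc_dist_le_sheet.
- apply: le_trans (glued_dist_le_via _ _) _; apply: le_trans (dist_via_triangler K _ _ _) _.
  exact/leeD2l/mc_dist_le_sheet.
- exact: le_trans (glued_dist_le_via _ _) (dist_via_triangle K _ _ _).
Qed.

Lemma glued_dist_separated : Defs.separated glued_dist.
Proof.
move=> p q pq0 qp0.
have dist0 u v : glued_dist u v = 0%E -> d (val u).1 (val v).1 = 0%E.
  move=> uv0; apply: le_anti; rewrite mc_dist_ge0 andbT -uv0.
  exact: mc_dist_le_glued.
have base_eq : (val p).1 = (val q).1 := mc_separated (dist0 _ _ pq0) (dist0 _ _ qp0).
have height_eq : (val p).2 = (val q).2.
  have [Kp|nKp] := pselect (K (val p).1).
    have height0 (z : glued_space) : K (val z).1 -> (val z).2 = 0.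
      by case: (set_valP z) => // ->.
    by rewrite !height0 // -base_eq.
  have spq : same_sheet (val p, val q).
    apply: contrapT => nspq; move: pq0.
    rewrite /glued_dist sheet_dist_nsame // (min_idPr (leey _)) -base_eq => via0.
    by have := dist_via_gt0 K_compact nKp; rewrite via0 ltxx.
  by case: spq => -[/= -> ->]; rewrite ?base_eq.
apply: val_inj.
by rewrite [val p]surjective_pairing [val q]surjective_pairing base_eq height_eq.
Qed.

Lemma glued_dist_continuous : upper_continuous glued_dist.
Proof.
apply/(upper_continuousP glued_dist_ge0)/lower_semicontinuous_min.
- apply: (lower_semicontinuous_comp _ sheet_dist_lsc).
  exact: continuous_map_pair (@set_val_continuous _ _) (@set_val_continuous _ _).
- have base_continuous := continuous_map_pair
    (continuousT_comp (@set_val_continuous _ (sheet0 `|` sheet_phi)) (@fst_continuous T RR))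
    (continuousT_comp (@set_val_continuous _ (sheet0 `|` sheet_phi)) (@fst_continuous T RR)).
  exact: (lower_semicontinuous_comp base_continuous (dist_via_lsc K_compact)).
Qed.

Definition glued : MetCHsep :=
  @MkMetCHsep glued_space glued_dist glued_space_compact glued_space_hausdorff
    (conj glued_dist_ge0 (conj glued_dist_refl glued_dist_triangle))
    glued_dist_separated glued_dist_continuous.

Lemma embed0_morphism : @is_morphism Y glued embed0.
Proof.
split; first exact: embed0_continuous.
by move=> y y'; apply: le_trans (glued_dist_le_sheet _ _) _; rewrite sheet_dist_same //; left.
Qed.

Lemma embed_phi_morphism : @is_morphism Y glued embed_phi.
Proof.
split; first exact: embed_phi_continuous.
by move=> y y'; apply: le_trans (glued_dist_le_sheet _ _) _; rewrite sheet_dist_same //; right.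
Qed.

End Gluing.

Lemma compact_point_separator (T : topologicalType) (A : set T) (y0 : T) :
  hausdorff_space T -> compact [set: T] -> compact A -> ~ A y0 ->
  exists phi : T -> RR, [/\ continuous phi, forall y, A y -> phi y = 0 & phi y0 = 1].
Proof.
move=> T_hausdorff T_compact A_compact Ay0.
have y0_closed : closed [set y0].
  exact: (accessible_closed_set1 (hausdorff_accessible T_hausdorff)).
have A_y0 : A `&` [set y0] = set0.
  by rewrite -subset0 => y [Ay /= yy0]; apply: Ay0; rewrite -yy0.
have := proj1 (@normal_separatorP RR _) (compact_normal T_hausdorff T_compact) A [set y0]
  (compact_closed T_hausdorff A_compact) y0_closed A_y0.
move=> /(@uniform_separatorP _ RR) [phi [phi_continuous _ phiA phiy0]].
exists phi; split => //; first by move=> y Ay; apply: phiA; exists y.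
by apply: phiy0; exists y0.
Qed.

Theorem proposition4p6 (X Y : MetCHsep) (f : mc_space X -> mc_space Y) :
  @is_morphism X Y f -> (@is_epi X Y f <-> forall y, exists x, f x = y).
Proof.
move=> [f_continuous _]; split => [f_epi y0|f_surj Z g h _ _ gfhf y]; last first.
  by have [x <-] := f_surj y; exact: gfhf.
apply: contrapT => y0_notin_range.
have range_compact : compact (range f).
  by apply: continuous_compact; [exact: continuous_subspaceT | exact: mc_compact].
have [|phi [phi_continuous phi_f phi_y0]] := compact_point_separator
    (@mc_hausdorff Y) (@mc_compact Y) range_compact (y0 := y0).
  by move=> [x _ fx]; apply: y0_notin_range; exists x.
have embeds_agree x : embed0 phi (f x) = embed_phi phi (f x).
  by apply/embed0_eq_phi/phi_f; exists x.
have := f_epi (glued phi_continuous) _ _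
  (embed0_morphism phi_continuous) (embed_phi_morphism phi_continuous) embeds_agree y0.
by move/embed0_eq_phi; rewrite phi_y0; apply/eqP; rewrite oner_eq0.
Qed.
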